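(* An undirected graph $\mathcal{U}$ is a UEC-representative if and only if $\alpha(\mathcal{U})=\delta(\mathcal{U})$.
   Context: For a DAG $\mathcal{D}$, a trek is a path with no repeated vertices and no collider (a node whose two incident path edges both point into it); the unconditional dependence graph $\mathcal{U}^\mathcal{D}$ is the undirected graph on the nodes of $\mathcal{D}$ in which distinct $v,w$ are adjacent iff there is a trek between them. An undirected graph $\mathcal{U}$ on vertex set $V$ is a UEC-representative if $\mathcal{U}=\mathcal{U}^\mathcal{D}$ for some DAG $\mathcal{D}$ on $V$. A clique is a set of pairwise adjacent vertices (single vertices are cliques). An edge clique cover of $\mathcal{U}$ is a collection of cliques such that every vertex and every edge of $\mathcal{U}$ lies in at least one clique of the collection; the intersection number $\delta(\mathcal{U})$ is the minimum cardinality of an edge clique cover. The independence number $\alpha(\mathcal{U})$ is the maximum cardinality of a set of pairwise nonadjacent vertices. *)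

From mathcomp Require Import all_boot.
Set Implicit Arguments. Unset Strict Implicit. Unset Printing Implicit Defensive.

Record ugraph (V : finType) := UGraph {
  adj : rel V;
  adj_sym : symmetric adj;
  adj_irr : irreflexive adj }.

Section Defs.
Variable V : finType.

(* A DAG on V: directed edge relation [D x y] means x -> y, with no directed
   cycle (equivalently: no edge x -> y with y reaching x). *)
Definition acyclic (D : rel V) : Prop := forall x y, D x y -> ~~ connect D y x.

Fixpoint no_collider (D : rel V) (s : seq V) : bool :=
  match s with
  | a :: ((b :: c :: _) as t) => ~~ (D a b && D c b) && no_collider D t
  | _ => true
  end.

Definition is_trek (D : rel V) (x y : V) (p : seq V) : bool :=
  [&& path (fun a b => D a b || D b a) x p, last x p == y,
      uniq (x :: p) & no_collider D (x :: p)].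

Definition udg_adj (D : rel V) (v w : V) : Prop :=
  v != w /\ exists p, is_trek D v w p.

Definition UEC_representative (U : ugraph V) : Prop :=
  exists D : rel V, acyclic D /\ forall v w, adj U v w <-> udg_adj D v w.

Definition clique (U : ugraph V) (C : {set V}) : bool :=
  [forall x in C, forall y in C, (x != y) ==> adj U x y].

Definition stable (U : ugraph V) (S : {set V}) : bool :=
  [forall x in S, forall y in S, ~~ adj U x y].

Definition is_ecc (U : ugraph V) (F : {set {set V}}) : bool :=
  [&& [forall C in F, clique U C],
      [forall v, exists C in F, v \in C] &
      [forall v, forall w, adj U v w ==> [exists C in F, (v \in C) && (w \in C)]]].

Definition alpha (U : ugraph V) : nat := \max_(S : {set V} | stable U S) #|S|.

Lemma ecc_exists (U : ugraph V) : exists n : nat, [exists F : {set {set V}}, is_ecc U F && (#|F| == n)].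
Proof.
exists #|[set C | clique U C]|; apply/existsP; exists [set C | clique U C]; rewrite eqxx andbT.
apply/and3P; split.
- by apply/forall_inP => C; rewrite inE.
- apply/forallP => v; apply/exists_inP; exists [set v]; last by rewrite inE.
  rewrite inE; apply/forall_inP => x; rewrite inE => /eqP ->.
  by apply/forall_inP => y; rewrite inE => /eqP ->; rewrite eqxx.
- apply/forallP => v; apply/forallP => w; apply/implyP => hvw.
  apply/exists_inP; exists [set v; w]; last by rewrite !inE !eqxx orbT.
  rewrite inE; apply/forall_inP => x; rewrite !inE => hx.
  apply/forall_inP => y; rewrite !inE => hy; apply/implyP.
  case/orP: hx => /eqP ->; case/orP: hy => /eqP ->; rewrite ?eqxx //= => _ //.
  by rewrite adj_sym.
Qed.

Definition delta (U : ugraph V) : nat := ex_minn (ecc_exists U).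

End Defs.

(* Distinct vertices of a stable set lie in distinct cliques, so always
   alpha <= delta.
   Forward: when U = U^D, the descendant sets of the sources of D are cliques
   covering U (every trek has a top vertex, an ancestor of both ends), and the
   sources themselves are pairwise non-adjacent, so delta <= #sources <= alpha.
   Backward: a maximum stable set S meets every clique at most once, so a cover
   F with #|F| = #|S| matches each s in S with a clique C_s containing it and
   these exhaust F; orienting s -> v for every v in C_s outside S gives a DAG of
   depth one in which two vertices are joined by a trek exactly when they share
   a clique C_s. *)
From mathcomp Require Import all_boot.
Set Implicit Arguments. Unset Strict Implicit. Unset Printing Implicit Defensive.

Section Treks.
Variable V : finType.
Implicit Types (D : rel V) (x y z : V) (p q : seq V).

Lemma no_collider_behead D a p : no_collider D (a :: p) -> no_collider D p.
Proof. by case: p => [|b [|c r]] //= /andP[]. Qed.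

Lemma no_collider_catr D p q : no_collider D (p ++ q) -> no_collider D q.
Proof. by elim: p => //= a p IH /no_collider_behead. Qed.

Lemma acyclic_irr D x : acyclic D -> ~~ D x x.
Proof. by move=> hD; apply/negP => hxx; move: (hD _ _ hxx); rewrite connect0. Qed.

Lemma acyclic_asym D x y : acyclic D -> D x y -> ~~ D y x.
Proof. by move=> hD hxy; apply/negP => hyx; move: (hD _ _ hxy); rewrite connect1. Qed.

Lemma acyclic_path_notin D a q : acyclic D -> path D a q -> a \notin q.
Proof.
move=> hD; case: q => [|u q] //= /andP[hau hq]; apply/negP => ha.
by move: (hD _ _ hau); rewrite (path_connect hq ha).
Qed.

Lemma is_trek_nil D x : is_trek D x x [::].
Proof. by rewrite /is_trek /= eqxx. Qed.

(* If x already lies on the trek, cut it there; otherwise z -> x is prepended,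
   creating no collider since the new first edge points out of z. *)
Lemma trek_from_child D x y z p : acyclic D -> is_trek D z y p -> D z x -> x != y ->
  exists p', is_trek D x y p'.
Proof.
move=> hD /and4P[hp hl hu hnc] hzx hxy.
have hxz : x != z by apply: contraTneq hzx => ->; exact: acyclic_irr.
have [hxp|hxp] := boolP (x \in p).
- case/splitPr: hxp hp hl hu hnc => p1 p2 hp hl hu hnc.
  exists p2; apply/and4P; split.
  + by move: hp; rewrite cat_path /= => /and3P[].
  + by move: hl; rewrite last_cat.
  + by move: hu; rewrite /= cat_uniq => /andP[_ /and3P[_ _]].
  + by apply: (@no_collider_catr D (z :: p1)); rewrite cat_cons.
- exists (z :: p); apply/and4P; split=> //.
  + by rewrite /= hzx orbT.
  + by rewrite /= in_cons negb_or hxz hxp.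
  + move: hnc; case: p {hp hl hu hxp} => [|c r] //= hnc.
    by rewrite (negbTE (acyclic_asym hD hzx)).
Qed.

Lemma trek_along_path D a y p q : acyclic D -> is_trek D a y p -> path D a q ->
  last a q != y -> (exists p', is_trek D (last a q) y p') \/ y \in q.
Proof.
move=> hD; elim: q a p => [|u q IH] a p ht /=; first by left; exists p.
move=> /andP[hau hq] hl.
have [<-|huy] := eqVneq u y; first by right; rewrite mem_head.
have [p' ht'] := trek_from_child hD ht hau huy.
by case: (IH u p' ht' hq hl) => [h|h]; [left | right; rewrite in_cons h orbT].
Qed.

Lemma trek_to_ancestor D s y : acyclic D -> connect D s y -> y != s ->
  exists p, is_trek D y s p.
Proof.
move=> hD /connectP[q hq ->] hne.
case: (trek_along_path hD (is_trek_nil D s) hq hne) => // hs.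
by move: (acyclic_path_notin hD hq); rewrite hs.
Qed.

(* The second conjunct strengthens the induction: a collider-free path whose
   first edge points forward keeps pointing forward to its end. *)
Lemma no_collider_path_top D x p :
  path (fun a b => D a b || D b a) x p -> no_collider D (x :: p) ->
  (exists a, connect D a x && connect D a (last x p)) /\
  (D x (head x p) -> connect D x (last x p)).
Proof.
elim: p x => [|z p IH] x.
  by move=> _ _; split; [exists x; rewrite connect0 | rewrite /= connect0].
move=> hxp hnc; move: hxp => /= /andP[hxz hp]; rewrite [last _ _]/=.
have [[a /andP[haz hal]] hfwd] := IH z hp (no_collider_behead hnc).
have hfwd_x : D x z -> connect D x (last z p).
  move=> dxz; apply: connect_trans (connect1 dxz) _.
  move: hp hnc hfwd; case: p {IH hal} => [|c r] /=; first by rewrite connect0.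
  move=> /andP[hzc _] /andP[hn _]; apply.
  by case/orP: hzc => // hcz; move: hn; rewrite dxz hcz.
split=> //; case/orP: hxz => [dxz|dzx]; first by exists x; rewrite connect0 hfwd_x.
by exists a; rewrite hal (connect_trans haz (connect1 dzx)).
Qed.

Lemma trek_common_ancestor D x y p : is_trek D x y p ->
  exists a, connect D a x && connect D a y.
Proof. by case/and4P=> hp /eqP <- _ hnc; exact: (no_collider_path_top hp hnc).1. Qed.

Definition source D s := [forall u, ~~ D u s].

Lemma source_ancestor D a s : source D s -> connect D a s -> a = s.
Proof.
move=> /forallP hs /connectP[q]; case/lastP: q => [|q t] //=.
rewrite rcons_path last_rcons => /andP[_ ht] et.
by move: (hs (last a q)); rewrite et ht.
Qed.

Lemma exists_source D v : acyclic D -> exists2 s, source D s & connect D s v.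
Proof.
move=> hD; elim: {v}#|[set u | connect D u v]| {-2}v (leqnn #|[set u | connect D u v]|)
  => [|n IH] v hn.
  by move: hn; rewrite leqn0 => /eqP/cards0_eq/setP/(_ v); rewrite !inE connect0.
have [hs|] := boolP (source D v); first by exists v; rewrite ?connect0.
rewrite negb_forall => /existsP[u /negPn huv].
have [s hs hsu] : exists2 s, source D s & connect D s u.
  apply: IH; rewrite -ltnS; apply: leq_trans hn; apply: proper_card.
  rewrite properE; apply/andP; split.
    by apply/subsetP => w; rewrite !inE => hw; exact: connect_trans hw (connect1 huv).
  by apply/subsetPn; exists v; rewrite !inE ?connect0 //; exact: hD _ _ huv.
by exists s => //; exact: connect_trans hsu (connect1 huv).
Qed.

End Treks.

Section CliquesAndStableSets.
Variable V : finType.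
Variable U : ugraph V.
Implicit Types (C S : {set V}) (F : {set {set V}}).

Lemma clique_adj C x y : clique U C -> x \in C -> y \in C -> x != y -> adj U x y.
Proof.
by move=> /forall_inP/(_ x) h hx hy; move: (h hx) => /forall_inP/(_ y hy)/implyP.
Qed.

Lemma stable_nadj S x y : stable U S -> x \in S -> y \in S -> ~~ adj U x y.
Proof. by move=> /forall_inP/(_ x) h hx hy; move: (h hx) => /forall_inP/(_ y hy). Qed.

Lemma clique_stable_meet C S s t : clique U C -> stable U S ->
  s \in C -> t \in C -> s \in S -> t \in S -> s = t.
Proof.
move=> hC hS hsC htC hs ht; apply/eqP; apply: contraNT (stable_nadj hS hs ht).
exact: clique_adj hC hsC htC.
Qed.

Lemma ecc_clique F C : is_ecc U F -> C \in F -> clique U C.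
Proof. by case/and3P=> /forall_inP + _ _; apply. Qed.

Lemma ecc_edge F v w : is_ecc U F -> adj U v w ->
  exists2 C, C \in F & (v \in C) && (w \in C).
Proof.
by case/and3P=> _ _ /forallP/(_ v)/forallP/(_ w)/implyP hvw /hvw/exists_inP.
Qed.

Lemma leq_alpha S : stable U S -> #|S| <= alpha U.
Proof. exact: (@leq_bigmax_cond _ (stable U) (fun S : {set V} => #|S|)). Qed.

Lemma alpha_witness : exists2 S, stable U S & #|S| = alpha U.
Proof.
have h0 : 0 < #|stable U|.
  by apply/card_gt0P; exists set0; apply/forall_inP => x; rewrite inE.
have [S hS e] := eq_bigmax_cond (fun S : {set V} => #|S|) h0.
by exists S => //; rewrite /alpha e.
Qed.

Lemma leq_delta F : is_ecc U F -> delta U <= #|F|.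
Proof.
move=> hF; rewrite /delta; case: ex_minnP => n _; apply.
by apply/existsP; exists F; rewrite hF eqxx.
Qed.

Lemma delta_witness : exists2 F, is_ecc U F & #|F| = delta U.
Proof. by rewrite /delta; case: ex_minnP => n /existsP[F /andP[hF /eqP]]; exists F. Qed.

(* A clique of the cover containing [s] (junk [set0] if [F] is no cover). *)
Definition cover_pick F s : {set V} := odflt set0 [pick C in F | s \in C].

Lemma cover_pickP F s : is_ecc U F -> cover_pick F s \in F /\ s \in cover_pick F s.
Proof.
case/and3P=> _ /forallP/(_ s)/exists_inP[C hC hsC] _.
by rewrite /cover_pick; case: pickP => [C' /andP[]|/(_ C)] //=; rewrite hC hsC.
Qed.

Lemma cover_pick_inj F S : is_ecc U F -> stable U S -> {in S &, injective (cover_pick F)}.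
Proof.
move=> hF hS s t hs ht e.
have [hsF hsC] := cover_pickP s hF; have [_ htC] := cover_pickP t hF.
by apply: (clique_stable_meet (ecc_clique hF hsF) hS) => //; rewrite e.
Qed.

Lemma alpha_le_delta : alpha U <= delta U.
Proof.
have [S hS <-] := alpha_witness; have [F hF <-] := delta_witness.
rewrite -(card_in_imset (cover_pick_inj hF hS)); apply: subset_leq_card.
by apply/subsetP => C /imsetP[s _ ->]; exact: (cover_pickP s hF).1.
Qed.

End CliquesAndStableSets.

Section DependenceGraphOfDAG.
Variable V : finType.
Variables (U : ugraph V) (D : rel V).
Hypothesis acyclicD : acyclic D.
Hypothesis U_udg : forall v w, adj U v w <-> udg_adj D v w.

Lemma trek_adj x y p : x != y -> is_trek D x y p -> adj U x y.
Proof. by move=> hxy hp; apply/U_udg; split=> //; exists p. Qed.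

Lemma adj_common_ancestor x y : adj U x y -> exists a, connect D a x && connect D a y.
Proof. by move/U_udg=> [_ [p /trek_common_ancestor]]. Qed.

Lemma adj_descendant s w : connect D s w -> w != s -> adj U s w.
Proof.
move=> hsw hne; have [p hp] := trek_to_ancestor acyclicD hsw hne.
by rewrite adj_sym; exact: trek_adj hp.
Qed.

(* Take a trek from s to y and walk it forward along a directed path s ~> x:
   either the trek survives at x, or the path runs through y and x descends from y. *)
Lemma adj_co_descendants s x y : connect D s x -> connect D s y -> x != y -> adj U x y.
Proof.
move=> hx hy hxy.
have [exs|hxs] := eqVneq x s.
  by move: hxy hy; rewrite exs eq_sym => hne hy; exact: adj_descendant.
have [eys|hys] := eqVneq y s.
  by move: hxy hx; rewrite eys adj_sym => hne hx; exact: adj_descendant.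
have [_ [p hp]] := (U_udg s y).1 (adj_descendant hy hys).
move/connectP: hx => [q hq hlx].
case: (trek_along_path acyclicD hp hq); first by rewrite -hlx.
  by move=> [p' hp']; rewrite -hlx in hp'; exact: trek_adj hxy hp'.
move=> hyq; rewrite adj_sym; apply: adj_descendant hxy.
move: hq hlx; case/splitPr: hyq => q1 q2.
rewrite cat_path last_cat => /andP[_ /= /andP[_ hq2]] ->.
exact: (path_connect hq2 (mem_last _ _)).
Qed.

Definition descendants s := [set v | connect D s v].
Definition sources := [set s | source D s].

Lemma clique_descendants s : clique U (descendants s).
Proof.
apply/forall_inP => x; rewrite inE => hx; apply/forall_inP => y; rewrite inE => hy.
by apply/implyP; exact: adj_co_descendants hx hy.
Qed.

Lemma stable_sources : stable U sources.
Proof.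
apply/forall_inP => s; rewrite inE => hs; apply/forall_inP => t; rewrite inE => ht.
apply/negP => hst; have [hne _] := (U_udg s t).1 hst; move: hne.
have [a /andP[has hat]] := adj_common_ancestor hst.
by rewrite -(source_ancestor hs has) -(source_ancestor ht hat) eqxx.
Qed.

Lemma ecc_descendants_sources : is_ecc U (descendants @: sources).
Proof.
apply/and3P; split.
- by apply/forall_inP => C /imsetP[s _ ->]; exact: clique_descendants.
- apply/forallP => v; have [s hs hsv] := exists_source v acyclicD.
  apply/exists_inP; exists (descendants s); last by rewrite inE.
  by apply: imset_f; rewrite inE.
- apply/forallP => v; apply/forallP => w; apply/implyP => hvw.
  have [a /andP[hav haw]] := adj_common_ancestor hvw.
  have [s hs hsa] := exists_source a acyclicD.
  apply/exists_inP; exists (descendants s); first by apply: imset_f; rewrite inE.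
  by rewrite !inE (connect_trans hsa hav) (connect_trans hsa haw).
Qed.

Lemma delta_le_alpha_udg : delta U <= alpha U.
Proof.
apply: leq_trans (leq_delta ecc_descendants_sources) _.
exact: leq_trans (leq_imset_card _ _) (leq_alpha stable_sources).
Qed.

End DependenceGraphOfDAG.

Section StableSetMatchingCover.
Variable V : finType.
Variables (U : ugraph V) (S : {set V}) (F : {set {set V}}).
Hypotheses (stableS : stable U S) (eccF : is_ecc U F) (card_F_S : #|F| <= #|S|).

Lemma cover_pick_onto : cover_pick F @: S = F.
Proof.
apply/eqP; rewrite eqEcard (card_in_imset (cover_pick_inj eccF stableS)) card_F_S andbT.
by apply/subsetP => C /imsetP[s _ ->]; exact: (cover_pickP s eccF).1.
Qed.

Lemma cover_clique_center C : C \in F -> exists2 s, s \in S & C = cover_pick F s.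
Proof.
move=> hC; have /imsetP[s hs ->] : C \in cover_pick F @: S by rewrite cover_pick_onto.
by exists s.
Qed.

Definition star_dag : rel V := fun x y => [&& x \in S, y \notin S & y \in cover_pick F x].

Lemma connect_star_dag a v : connect star_dag a v -> a = v \/ star_dag a v.
Proof.
move=> /connectP[[|u [|u' q]] /= hp ->]; [by left | by right; case/andP: hp |].
by case/and3P: hp => /and3P[_ hu _] /and3P[hu' _ _] _; rewrite hu' in hu.
Qed.

Lemma acyclic_star_dag : acyclic star_dag.
Proof.
move=> x y /and3P[hx hy _]; apply/negP => /connect_star_dag[exy|/and3P[hy' _ _]].
  by move: hx; rewrite -exy (negbTE hy).
by rewrite hy' in hy.
Qed.

(* An edge v w lies in a clique C_s of F; the trek is v - w or v <- s -> w. *)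
Lemma adj_star_trek v w : adj U v w -> udg_adj star_dag v w.
Proof.
move=> hvw; have hne : v != w by apply: contraTneq hvw => ->; rewrite adj_irr.
split=> //; have [C hC /andP[hv hw]] := ecc_edge eccF hvw.
have [s hs eC] := cover_clique_center hC.
have hsC : s \in C by rewrite eC; exact: (cover_pickP s eccF).2.
have notS x : x \in C -> x != s -> x \notin S.
  move=> hx; apply: contra => hxS; apply/eqP.
  exact: clique_stable_meet (ecc_clique eccF hC) stableS hx hsC hxS hs.
have [evs|hvs] := eqVneq v s.
  have hwS : w \notin S by apply: notS => //; rewrite -evs eq_sym.
  exists [:: w]; rewrite /is_trek /= !inE hne eqxx /= !andbT.
  by rewrite /star_dag evs hs hwS -eC hw.
have [ews|hws] := eqVneq w s.
  have hvS : v \notin S by apply: notS => //; rewrite -ews.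
  exists [:: w]; rewrite /is_trek /= !inE hne eqxx /= !andbT.
  by rewrite /star_dag ews hs hvS -eC hv orbT.
have hvS : v \notin S by apply: notS.
have hwS : w \notin S by apply: notS.
exists [:: s; w]; rewrite /is_trek /= !inE !negb_or hne hvs eqxx (eq_sym s w) hws.
by rewrite /star_dag hs hvS hwS -eC hv hw (negbTE hvS) /= ?andbT ?orbT.
Qed.

(* The top of a trek is v, w or a common parent s; each case puts v, w in C_s. *)
Lemma star_trek_adj v w : udg_adj star_dag v w -> adj U v w.
Proof.
move=> [hne [p /trek_common_ancestor[a /andP[hav haw]]]].
have clique_pick x : clique U (cover_pick F x).
  exact: ecc_clique eccF (cover_pickP x eccF).1.
have pick_self x := (cover_pickP x eccF).2.
case: (connect_star_dag hav) => [eav|/and3P[_ _ hva]];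
  case: (connect_star_dag haw) => [eaw|/and3P[_ _ hwa]].
- by move: hne; rewrite -eav -eaw eqxx.
- by rewrite eav in hwa; exact: clique_adj (clique_pick v) (pick_self v) hwa hne.
- rewrite eaw in hva; rewrite adj_sym.
  by apply: clique_adj (clique_pick w) (pick_self w) hva _; rewrite eq_sym.
- exact: clique_adj (clique_pick a) hva hwa hne.
Qed.

Lemma UEC_representative_star : UEC_representative U.
Proof.
exists star_dag; split; first exact: acyclic_star_dag.
by move=> v w; split; [exact: adj_star_trek | exact: star_trek_adj].
Qed.

End StableSetMatchingCover.

Theorem theorem2p9 (V : finType) (U : ugraph V) :
  UEC_representative U <-> alpha U = delta U.
Proof.
split.
  case=> D [acyclicD U_udg]; apply/eqP.
  by rewrite eqn_leq alpha_le_delta (delta_le_alpha_udg acyclicD U_udg).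
move=> alpha_delta.
have [S stableS cardS] := alpha_witness U; have [F eccF cardF] := delta_witness U.
by apply: (UEC_representative_star stableS eccF); rewrite cardS cardF alpha_delta.
Qed.
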